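(* Let $R$ be an integral domain. If $R$ is perinormal, then $R_W$ is perinormal for every multiplicative set $W \subseteq R$. Conversely, if $R_{\mathfrak{m}}$ is perinormal for every maximal ideal $\mathfrak{m}$ of $R$, then $R$ is perinormal.
   Context: All rings are commutative with identity; ''local'' means having a unique maximal ideal; an overring of a domain $R$ is a ring between $R$ and its fraction field. A ring extension $A \subseteq B$ satisfies going-down if whenever $\mathfrak{p} \subset \mathfrak{q}$ are primes of $A$ and $Q$ is a prime of $B$ with $Q \cap A = \mathfrak{q}$, there is a prime $P \subseteq Q$ of $B$ with $P \cap A = \mathfrak{p}$. A domain $R$ is perinormal if every local overring $S$ of $R$ such that $R \subseteq S$ satisfies going-down is a localization of $R$. *)

From HB Require Import structures.
From mathcomp Require Import all_boot all_order all_algebra.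
From mathcomp Require Export fraction.
Set Implicit Arguments. Unset Strict Implicit. Unset Printing Implicit Defensive.
Import Order.TTheory GRing.Theory Num.Theory.
Local Open Scope ring_scope.

(* Sets are Prop-valued predicates.  Subrings, ideals, primes are taken
   relative to an ambient commutative ring T. *)

Definition subsetP {T : Type} (A B : T -> Prop) := forall x, A x -> B x.

Section RingDefs.
Variable T : comNzRingType.

Definition is_subring (S : T -> Prop) :=
  [/\ S 0, S 1, (forall x y, S x -> S y -> S (x - y))
    & (forall x y, S x -> S y -> S (x * y))].

Definition is_ideal (S I : T -> Prop) :=
  [/\ subsetP I S, I 0, (forall x y, I x -> I y -> I (x + y))
    & (forall r x, S r -> I x -> I (r * x))].

Definition is_prime (S P : T -> Prop) :=
  [/\ is_ideal S P, ~ P 1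
    & forall x y, S x -> S y -> P (x * y) -> P x \/ P y].

Definition is_maximal (S M : T -> Prop) :=
  [/\ is_ideal S M, ~ M 1
    & forall I, is_ideal S I -> subsetP M I -> ~ I 1 -> subsetP I M].

Definition is_local (S : T -> Prop) :=
  exists M, is_maximal S M /\
    forall M', is_maximal S M' -> forall x, M' x <-> M x.

Definition going_down (A S : T -> Prop) :=
  forall p q : T -> Prop, is_prime A p -> is_prime A q -> subsetP p q ->
  forall Q : T -> Prop, is_prime S Q -> (forall x, A x -> (Q x <-> q x)) ->
  exists P : T -> Prop, [/\ is_prime S P, subsetP P Q
                         & forall x, A x -> (P x <-> p x)].

Definition mult_set (A W : T -> Prop) :=
  [/\ subsetP W A, W 1, ~ W 0 & forall x y, W x -> W y -> W (x * y)].

End RingDefs.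

Section FieldDefs.
Variable K : fieldType.

Definition frac_field_of (A : K -> Prop) (x : K) :=
  exists a b, [/\ A a, A b, b != 0 & x = a / b].

Definition is_overring (A S : K -> Prop) :=
  [/\ is_subring S, subsetP A S & subsetP S (frac_field_of A)].

Definition localization (A W : K -> Prop) (x : K) :=
  exists a w, [/\ A a, W w & x = a / w].

Definition is_localization_of (A S : K -> Prop) :=
  exists W, mult_set A W /\ forall x, S x <-> localization A W x.

(* A (a subring of the field K, hence a domain) is perinormal *)
Definition perinormal (A : K -> Prop) :=
  forall S, is_overring A S -> is_local S -> going_down A S ->
    is_localization_of A S.

End FieldDefs.

(* For a domain R: its canonical image in {fraction R}, and R_W there. *)
Definition dom_image (R : idomainType) (x : {fraction R}) : Prop :=
  exists r : R, x = FracField.tofrac r.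

Definition loc_dom (R : idomainType) (W : R -> Prop) (x : {fraction R}) : Prop :=
  exists a w : R, W w /\ x = FracField.tofrac a / FracField.tofrac w.

Definition perinormal_dom (R : idomainType) := perinormal (@dom_image R).

From mathcomp Require Import all_boot all_algebra ring.
From mathcomp Require Import boolp classical_sets.
Set Implicit Arguments. Unset Strict Implicit. Unset Printing Implicit Defensive.
Import GRing.Theory.
Local Open Scope ring_scope.

(* Let A ⊆ A_W ⊆ S with W consisting of units of S.  Going-down for A_W ⊆ S
   gives going-down for A ⊆ S: a prime of A below the contraction of a prime
   of S avoids W, so it extends to a prime of A_W.  Going-down for A ⊆ S gives
   going-down for A_W ⊆ S, as a prime of A_W is determined by its contraction
   to A.  Finally S is a localization of A iff it is one of A_W.  For the second, let S be a local overring of R with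
   going-down and maximal ideal M, and m a maximal ideal of R containing M ∩ R:
   the elements of R \ m lie outside M, so they are units of S, and S is a
   localization of the perinormal ring R_m, hence of R. *)

Section Ideals.
Variable T : comNzRingType.
Implicit Types S I M P : T -> Prop.

Lemma subringT : is_subring (fun _ : T => True).
Proof. by []. Qed.

Lemma subring_add S x y : is_subring S -> S x -> S y -> S (x + y).
Proof.
move=> [S0 _ SB _] Sx Sy; have := SB x (0 - y) Sx (SB 0 y S0 Sy).
by rewrite sub0r opprK.
Qed.

Lemma ideal_mul_unit S I u v x : is_ideal S I -> S u -> S v -> v * u = 1 ->
  I (u * x) <-> I x.
Proof.
move=> [_ _ _ IM] Su Sv vu; split; last exact: IM.
by move=> /(IM v _ Sv); rewrite mulrA vu mul1r.
Qed.

Lemma prime_contract A S P : is_subring A -> subsetP A S -> is_prime S P ->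
  is_prime A (fun x => A x /\ P x).
Proof.
move=> subA AS [[PS P0 PD PM] nP1 Pp]; have [A0 _ _ AM] := subA.
split; [split| |].
- by move=> x [].
- by [].
- by move=> x y [Ax Px] [Ay Py]; split; [exact: subring_add | exact: PD].
- by move=> r x Ar [Ax Px]; split; [exact: AM | apply: PM => //; exact: AS].
- by case.
- by move=> x y Ax Ay [_ /(Pp x y (AS _ Ax) (AS _ Ay))]; tauto.
Qed.

(* Zorn's lemma is applied to proper S-submodules that contain I or are
   empty, so that the union of the empty chain is admissible. *)
Lemma maximal_ideal_exists S I : is_ideal S I -> ~ I 1 ->
  exists M, is_maximal S M /\ subsetP I M.
Proof.
move=> [IS I0 ID IM] nI1.
pose adm (A : T -> Prop) := [/\ ~ A 1, subsetP A S,
  (forall x y, A x -> A y -> A (x + y)), (forall r x, S r -> A x -> A (r * x))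
  & ((forall x, ~ A x) \/ subsetP I A)].
have [M [[nM1 MS MD MM MI] Mmax]] :
    exists M, adm M /\ forall B, (M `<` B)%classic -> ~ adm B.
  apply: Zorn_bigcup => F Fadm Ftot; split.
  - by case=> X /Fadm [].
  - by move=> x [X /Fadm [_ XS _ _ _] /XS].
  - move=> x y [X FX Xx] [Y FY Yy].
    have [XY|YX] := Ftot X Y FX FY.
    + by have [_ _ YD _ _] := Fadm Y FY; exists Y => //; apply: YD => //; apply: XY.
    + by have [_ _ XD _ _] := Fadm X FX; exists X => //; apply: XD => //; apply: YX.
  - by move=> r x Sr [X FX Xx]; have [_ _ _ XM _] := Fadm X FX; exists X => //; apply: XM.
  - case: (EM (exists2 X, F X & subsetP I X)) => [[X FX IX]|noI].
      by right=> x Ix; exists X => //; apply: IX.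
    left=> x [X FX Xx]; have [_ _ _ _ [/(_ x)//|IX]] := Fadm X FX.
    by apply: noI; exists X.
have IM' : subsetP I M.
  case: MI => // M0; exfalso; apply: (Mmax I); last by split => //; right.
  by split=> [x /M0 | /(_ 0 I0) /M0].
exists M; split => //; split => // [|J [JS J0 JD JM] MJ nJ1 x Jx].
  by split=> //; apply: IM'.
apply: contrapT => nMx; apply: (Mmax J); last first.
  by split=> //; right=> y /IM' /MJ.
by split=> // /(_ x Jx).
Qed.

Lemma maximal_prime S M : is_subring S -> is_maximal S M -> is_prime S M.
Proof.
move=> subS [[MS M0 MD MM] nM1 Mmax]; have [S0 S1 _ SM] := subS.
split=> // x y Sx Sy Mxy; case: (EM (M x)) => [|nMx]; [by left | right].
pose J z := exists m s, [/\ M m, S s & z = m + x * s].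
have idJ : is_ideal S J.
  split.
  - by move=> _ [m [s [Mm Ss ->]]]; apply: subring_add (MS _ Mm) (SM _ _ Sx Ss).
  - by exists 0, 0; rewrite mulr0 addr0.
  - move=> _ _ [m [s [Mm Ss ->]]] [m' [s' [Mm' Ss' ->]]].
    exists (m + m'), (s + s'); rewrite mulrDr addrACA.
    by split; [exact: MD | exact: subring_add |].
  - move=> r _ Sr [m [s [Mm Ss ->]]]; exists (r * m), (r * s).
    by rewrite mulrDr mulrCA; split; [exact: MM | exact: SM |].
have MJ : subsetP M J by move=> z Mz; exists z, 0; rewrite mulr0 addr0.
case: (EM (J 1)) => [[m [s [Mm Ss e]]] | nJ1].
  have -> : y = y * m + s * (x * y) by rewrite -{1}[y]mulr1 e; ring.
  by apply: MD; apply: MM.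
by case: nMx; apply: (Mmax J) => //; exists 0, 1; rewrite mulr1 add0r.
Qed.

Lemma local_unit S : is_subring S -> is_local S ->
  exists M, is_maximal S M /\ forall x, S x -> ~ M x -> exists2 y, S y & x * y = 1.
Proof.
move=> subS [M [maxM Muniq]]; have [S0 S1 _ SM] := subS.
exists M; split => // x Sx nMx.
apply: contrapT => nunit.
pose J z := exists2 s, S s & z = x * s.
have idJ : is_ideal S J.
  split.
  - by move=> _ [s Ss ->]; exact: SM.
  - by exists 0; rewrite ?mulr0.
  - move=> _ _ [s Ss ->] [t St ->]; exists (s + t); rewrite ?mulrDr //.
    exact: subring_add.
  - by move=> r _ Sr [s Ss ->]; exists (r * s); [exact: SM | rewrite mulrCA].
have [M' [maxM' JM']] : exists M', is_maximal S M' /\ subsetP J M'.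
  by apply: maximal_ideal_exists => // -[s Ss e]; apply: nunit; exists s.
by apply/nMx/(Muniq M' maxM')/JM'; exists 1; rewrite ?mulr1.
Qed.

Lemma rmorph_preim_ideal (R : comNzRingType) (g : {rmorphism R -> T}) S I :
  (forall r, S (g r)) -> is_ideal S I -> is_ideal (fun _ => True) (fun r => I (g r)).
Proof.
move=> Sg [_ I0 ID IM]; split=> //.
- by rewrite rmorph0.
- by move=> x y Ix Iy; rewrite rmorphD; apply: ID.
- by move=> r x _ Ix; rewrite rmorphM; apply: IM.
Qed.

End Ideals.

Section Localization.
Variable K : fieldType.
Implicit Types A S W P : K -> Prop.

Definition unit_denom_frac A S (x : K) :=
  exists a w, [/\ A a, A w, w != 0, S w^-1 & x = a / w].

Lemma mult_set_neq0 A W : mult_set A W -> forall w, W w -> w != 0.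
Proof. by move=> [_ _ nW0 _] w Ww; apply: contraPneq nW0 => <-. Qed.

Variable A : K -> Prop.
Hypothesis subA : is_subring A.

Lemma subset_localization W : mult_set A W -> subsetP A (localization A W).
Proof. by move=> [_ W1 _ _] x Ax; exists x, 1; rewrite divr1. Qed.

Lemma localization_inv W w : W w -> localization A W w^-1.
Proof. by have [_ A1 _ _] := subA; exists 1, w; rewrite div1r. Qed.

Lemma localization_subring W : mult_set A W -> is_subring (localization A W).
Proof.
move=> mW; have [WA W1 _ WM] := mW; have [A0 A1 AB AM] := subA.
have nz := mult_set_neq0 mW.
split; [exact: subset_localization | exact: subset_localization | |].
- move=> _ _ [a [w [Aa Ww ->]]] [b [v [Ab Wv ->]]].
  exists (a * v - b * w), (w * v); split; [|exact: WM|].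
    by apply: AB; apply: AM => //; apply: WA.
  by field; rewrite !nz.
- move=> _ _ [a [w [Aa Ww ->]]] [b [v [Ab Wv ->]]].
  by exists (a * b), (w * v); rewrite invfM mulrACA; split; [exact: AM | exact: WM|].
Qed.

Lemma localization_subset W S : is_subring S -> subsetP A S ->
  (forall w, W w -> S w^-1) -> subsetP (localization A W) S.
Proof. by move=> [_ _ _ SM] AS Winv _ [a [w [Aa Ww ->]]]; apply: SM; auto. Qed.

Lemma frac_field_localization W : mult_set A W ->
  subsetP (frac_field_of (localization A W)) (frac_field_of A).
Proof.
move=> mW; have [WA _ _ _] := mW; have [_ _ _ AM] := subA.
have nz := mult_set_neq0 mW.
move=> _ [_ [_ [[a [w [Aa Ww ->]]] [b [v [Ab Wv ->]]] bv ->]]].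
have b0 : b != 0 by apply: contraNneq bv => ->; rewrite mul0r.
have [w0 v0] := (nz _ Ww, nz _ Wv).
exists (a * v), (w * b); split; [exact: AM (WA _ Wv) | exact: AM (WA _ Ww) _ | |].
  exact: mulf_neq0.
by field; rewrite b0 w0 v0.
Qed.

Lemma localization_unit_denom W : mult_set A W ->
  subsetP (localization A W) (unit_denom_frac A (localization A W)).
Proof.
move=> mW _ [a [w [Aa Ww ->]]]; have [WA _ _ _] := mW.
exists a, w; split => //; [exact: WA | exact: (mult_set_neq0 mW Ww) | exact: localization_inv].
Qed.

Lemma is_localization_of_unit_denom S : is_subring S -> subsetP A S ->
  subsetP S (unit_denom_frac A S) -> is_localization_of A S.
Proof.
move=> [_ S1 _ SM] AS Sfrac; have [_ A1 _ AM] := subA.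
exists (fun w => [/\ A w, w != 0 & S w^-1]); split.
  split; [by move=> w [] | by rewrite invr1 oner_neq0 | by case=> _ /eqP |].
  by move=> x y [Ax x0 Sx] [Ay y0 Sy]; rewrite mulf_neq0 // invfM; split; auto.
move=> x; split.
  by move=> /Sfrac [a [w [Aa Aw w0 Sw ->]]]; exists a, w.
by move=> [a [w [Aa [Aw w0 Sw] ->]]]; apply: SM; auto.
Qed.

Lemma unit_denom_of_localization S : is_localization_of A S ->
  subsetP S (unit_denom_frac A S).
Proof.
move=> [W [mW SW]] x /SW [a [w [Aa Ww ->]]]; have [WA _ _ _] := mW.
exists a, w; split => //; [exact: WA | exact: (mult_set_neq0 mW Ww) |].
by apply/SW; apply: localization_inv.
Qed.

Lemma unit_denom_frac_trans A' S : is_subring S -> subsetP A A' -> subsetP A' S ->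
  subsetP A' (unit_denom_frac A A') -> subsetP S (unit_denom_frac A' S) ->
  subsetP S (unit_denom_frac A S).
Proof.
move=> [_ _ _ SM] AA' A'S A'frac Sfrac; have [_ _ _ AM] := subA.
move=> _ /Sfrac [_ [_ [/A'frac [a [u [Aa Au u0 A'u ->]]]
                  /A'frac [b [v [Ab Av v0 A'v ->]]] bv Sbv ->]]].
have b0 : b != 0 by apply: contraNneq bv => ->; rewrite mul0r.
exists (a * v), (u * b); split; [exact: AM | exact: AM | by rewrite mulf_neq0 | |].
  have -> : (u * b)^-1 = u^-1 * ((b / v)^-1 * v^-1) by field; rewrite b0 u0 v0.
  by apply: (SM); [|apply: (SM) => //]; apply: A'S.
by field; rewrite b0 u0 v0.
Qed.

Lemma localization_prime W P : mult_set A W -> is_prime A P ->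
  (forall w, W w -> ~ P w) -> is_prime (localization A W) (localization P W).
Proof.
move=> mW [[PA P0 PD PM] nP1 Pp] WP; have [WA _ _ WM] := mW.
have [_ _ _ AM] := subA.
have nz := mult_set_neq0 mW.
split; [split| |].
- by move=> _ [a [w [Pa Ww ->]]]; exists a, w; split => //; apply: PA.
- by exists 0, 1; split; rewrite ?mul0r //; case: mW.
- move=> _ _ [a [w [Pa Ww ->]]] [b [v [Pb Wv ->]]].
  exists (v * a + w * b), (w * v); split; [|exact: WM|by field; rewrite !nz].
  by apply: PD; apply: PM => //; apply: WA.
- move=> _ _ [c [u [Ac Wu ->]]] [a [w [Pa Ww ->]]].
  by exists (c * a), (u * w); rewrite invfM mulrACA; split; [exact: PM | exact: WM |].
- move=> [a [w [Pa Ww e]]]; apply: (WP w Ww).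
  by have -> : w = a by rewrite -[w]mul1r e (divfK (nz _ Ww)).
- move=> _ _ [a [w [Aa Ww ->]]] [b [v [Ab Wv ->]]] [c [u [Pc Wu e]]].
  have wv0 : w * v != 0 by rewrite mulf_neq0 ?nz.
  have ecross : a * b * u = c * (w * v).
    by apply/eqP; rewrite -eqr_div ?(nz u Wu) // -e invfM mulrACA.
  have Pabu : P (a * b * u).
    by rewrite ecross mulrC; apply: PM => //; apply: WA; apply: WM.
  have [Pab | /(WP u Wu)//] := Pp _ _ (AM _ _ Aa Ab) (WA _ Wu) Pabu.
  by have [Pa | Pb] := Pp _ _ Aa Ab Pab; [left; exists a, w | right; exists b, v].
Qed.

Lemma localization_prime_contract W P : mult_set A W -> is_prime A P ->
  (forall w, W w -> ~ P w) -> forall x, A x -> localization P W x <-> P x.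
Proof.
move=> mW [[_ _ _ PM] _ Pp] WP x Ax; have [WA _ _ _] := mW; split.
  move=> [a [w [Pa Ww e]]].
  have Pxw : P (x * w) by rewrite e (divfK (mult_set_neq0 mW Ww)).
  by case: (Pp _ _ Ax (WA _ Ww) Pxw) => // /(WP w Ww).
by move=> Px; exists x, 1; split => //; [case: mW | rewrite divr1].
Qed.

Lemma going_down_of_localization W S : mult_set A W -> is_subring S ->
  subsetP (localization A W) S -> going_down (localization A W) S ->
  going_down A S.
Proof.
move=> mW subS AWS gd p q pp pq pq_sub Q pQ Qq.
have [[_ _ _ QM] nQ1 _] := pQ; have [[pA _ _ _] _ _] := pp; have [WA _ _ _] := mW.
have Winv w : W w -> S w^-1 by move=> Ww; apply: AWS; apply: localization_inv.
have Wq w : W w -> ~ q w.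
  move=> Ww /(Qq w (WA _ Ww)) Qw; apply: nQ1.
  by rewrite -(mulVf (mult_set_neq0 mW Ww)); apply: QM (Winv _ Ww) Qw.
have Wp w : W w -> ~ p w by move=> Ww /pq_sub; apply: Wq.
have pp' := localization_prime mW pp Wp.
have pq' := prime_contract (localization_subring mW) AWS pQ.
have [P [pP PQ Pp']] : exists P, [/\ is_prime S P, subsetP P Q
    & forall x, localization A W x -> (P x <-> localization p W x)].
  apply: (gd _ _ pp' pq' _ Q pQ) => [_ [a [w [pa Ww ->]]] | x AWx]; last by split=> [|[]].
  split; first by exists a, w; split => //; apply: pA.
  rewrite mulrC; apply: QM (Winv _ Ww) _; apply/(Qq _ (pA _ pa)); exact: pq_sub.
exists P; split => // x Ax.
by rewrite (Pp' x (subset_localization mW Ax)) (localization_prime_contract mW pp Wp Ax).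
Qed.

Lemma going_down_localization A' S : is_subring A' -> subsetP A A' -> subsetP A' S ->
  subsetP A' (unit_denom_frac A A') -> going_down A S -> going_down A' S.
Proof.
move=> subA' AA' A'S A'frac gd p' q' pp' pq' pq'_sub Q pQ Qq'.
have [P [pP PQ Pp]] : exists P, [/\ is_prime S P, subsetP P Q
    & forall x, A x -> (P x <-> A x /\ p' x)].
  apply: (gd _ _ (prime_contract subA AA' pp') (prime_contract subA AA' pq') _ Q pQ).
    by move=> x [Ax /pq'_sub].
  by move=> x Ax; rewrite (Qq' x (AA' _ Ax)); split=> [|[]].
exists P; split => // _ /A'frac [a [w [Aa Aw w0 A'w ->]]].
have [[idP _ _] [idp' _ _]] := (pP, pp').
have Vw : w^-1 * w = 1 by rewrite mulVf.
rewrite -(ideal_mul_unit _ idP (A'S _ (AA' _ Aw)) (A'S _ A'w) Vw).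
rewrite -(ideal_mul_unit _ idp' (AA' _ Aw) A'w Vw) mulrC divfK // Pp //.
by split=> [[]|].
Qed.

Lemma overring_localization W S : mult_set A W -> (forall w, W w -> S w^-1) ->
  is_overring A S -> is_overring (localization A W) S.
Proof.
move=> mW Winv [subS AS Sfrac]; split => //; first exact: localization_subset.
move=> x /Sfrac [a [b [Aa Ab b0 ->]]].
by exists a, b; split => //; apply: subset_localization.
Qed.

End Localization.

Section Perinormal.
Variable K : fieldType.
Variable A : K -> Prop.
Hypothesis subA : is_subring A.

Lemma perinormal_localization W : perinormal A -> mult_set A W ->
  perinormal (localization A W).
Proof.
move=> perA mW S ovS locS gdS; have [subS AWS Sfrac] := ovS.
have AS : subsetP A S by move=> x /(subset_localization mW) /AWS.
have ovA : is_overring A S.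
  by split=> // x /Sfrac; apply: frac_field_localization.
have gdA := going_down_of_localization subA mW subS AWS gdS.
apply: (is_localization_of_unit_denom (localization_subring subA mW)) => // x Sx.
have [a [w [Aa Aw w0 Sw ->]]] := unit_denom_of_localization subA (perA S ovA locS gdA) Sx.
by exists a, w; split => //; apply: subset_localization.
Qed.

Lemma is_localization_of_perinormal_localization U S :
  is_overring A S -> is_local S -> going_down A S -> mult_set A U ->
  (forall u, U u -> S u^-1) -> perinormal (localization A U) ->
  is_localization_of A S.
Proof.
move=> ovS locS gdS mU Uinv perAU; have [subS AS _] := ovS.
have subAU := localization_subring subA mU.
have AUS := localization_subset subS AS Uinv.
have AUfrac := localization_unit_denom subA mU.
have gdAU := going_down_localization subA subAU (subset_localization mU) AUS AUfrac gdS.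
have SAU := unit_denom_of_localization subAU
  (perAU S (overring_localization mU Uinv ovS) locS gdAU).
apply: (is_localization_of_unit_denom subA subS AS).
exact: (unit_denom_frac_trans subA subS (subset_localization mU) AUS AUfrac SAU).
Qed.

End Perinormal.

Section Domain.
Variable R : idomainType.
Local Notation tofrac := (@FracField.tofrac R).

Lemma dom_image_subring : is_subring (@dom_image R).
Proof.
split; first by exists 0; rewrite rmorph0.
- by exists 1; rewrite rmorph1.
- by move=> _ _ [a ->] [b ->]; exists (a - b); rewrite rmorphB.
- by move=> _ _ [a ->] [b ->]; exists (a * b); rewrite rmorphM.
Qed.

Lemma mult_set_tofrac (W : R -> Prop) : mult_set (fun _ => True) W ->
  mult_set (@dom_image R) (tofrac @` W)%classic.
Proof.
move=> [_ W1 nW0 WM]; split.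
- by move=> _ [w _ <-]; exists w.
- by exists 1; rewrite ?rmorph1.
- by move=> [w Ww /eqP]; rewrite tofrac_eq0 => /eqP w0; apply: nW0; rewrite -w0.
- by move=> _ _ [x Wx <-] [y Wy <-]; exists (x * y); [exact: WM | rewrite rmorphM].
Qed.

Lemma loc_domE (W : R -> Prop) : loc_dom W = localization (@dom_image R) (tofrac @` W)%classic.
Proof.
apply/funext => x; apply/propext; split.
  by move=> [a [w [Ww ->]]]; exists (tofrac a), (tofrac w); split; [exists a | exists w |].
by move=> [_ [_ [[a ->] [w Ww <-] ->]]]; exists a, w.
Qed.

Lemma perinormal_dom_localization (W : R -> Prop) : perinormal_dom R ->
  mult_set (fun _ => True) W -> perinormal (loc_dom W).
Proof.
move=> perR mW; rewrite loc_domE.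
exact: (perinormal_localization dom_image_subring perR (mult_set_tofrac mW)).
Qed.

Lemma perinormal_dom_of_maximal_localizations :
  (forall m : R -> Prop, is_maximal (fun _ => True) m ->
     perinormal (loc_dom (fun x => ~ m x))) ->
  perinormal_dom R.
Proof.
move=> perRm S ovS locS gdS; have [subS BS _] := ovS.
have [M [maxM Munit]] := local_unit subS locS; have [idM nM1 _] := maxM.
have idMR : is_ideal (fun _ => True) (fun r => M (tofrac r)).
  by apply: (rmorph_preim_ideal _ idM) => r; apply: BS; exists r.
have [m [maxm Mm]] :
    exists m, is_maximal (fun _ => True) m /\ subsetP (fun r => M (tofrac r)) m.
  by apply: (maximal_ideal_exists idMR); rewrite rmorph1.
have [[_ m0 _ _] nm1 mprime] := maximal_prime (subringT R) maxm.
have mU : mult_set (fun _ => True) (fun x => ~ m x).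
  by split=> [//|//|/(_ m0)//|x y nmx nmy /(mprime _ _ I I)[/nmx|/nmy]].
have Uinv u : (tofrac @` (fun x => ~ m x))%classic u -> S u^-1.
  move=> [r nmr <-]; have Sr : S (tofrac r) by apply: BS; exists r.
  by have [y Sy /mulr1_eq ->] := Munit _ Sr (fun Mr => nmr (Mm r Mr)).
apply: (is_localization_of_perinormal_localization dom_image_subring ovS locS gdS
  (mult_set_tofrac mU) Uinv).
by rewrite -loc_domE; apply: perRm.
Qed.

End Domain.

Theorem proposition2p5 (R : idomainType) :
  (perinormal_dom R ->
     forall W : R -> Prop, mult_set (fun _ => True) W -> perinormal (loc_dom W))
  /\
  ((forall m : R -> Prop, is_maximal (fun _ => True) m ->
       perinormal (loc_dom (fun x => ~ m x))) ->
     perinormal_dom R).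
Proof.
split; first by move=> perR W; apply: perinormal_dom_localization.
exact: perinormal_dom_of_maximal_localizations.
Qed.
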